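(* Every quaternary matrix $M$ that contains a cycle of length at least $6$ contains a $2\times 2$, $2\times 3$, or $3\times 2$ submatrix that is not a weak lonesum matrix.
   Context: A quaternary matrix has entries in $\{0,1,2,3\}$; a $q$-ary matrix has entries in $\{0,\ldots,q-1\}$. The structure vector of a $q$-ary vector $v=(v_1,\ldots,v_n)$ is $(a_0,\ldots,a_{q-1})$ with $a_k=|\{i: v_i=k\}|$. A $q$-ary $m\times n$ matrix is a weak lonesum matrix if no other $q$-ary $m\times n$ matrix has the same row structure vectors and column structure vectors. In a matrix $M$, a path is a sequence $(M_{i_1,j_1},\ldots,M_{i_k,j_k})$ of entries at pairwise distinct positions such that: (1) for each $l\le k-1$, $i_l=i_{l+1}$ or $j_l=j_{l+1}$; (2) for each $l\le k-2$, $|\{i_l,i_{l+1},i_{l+2}\}|\ge2$ and $|\{j_l,j_{l+1},j_{l+2}\}|\ge 2$; (3) there are two distinct values $a,b$ with the entries' values being $(a,b,a,b,\ldots)$ alternating. The path is a cycle of length $k$ if, setting $(i_{k+1},j_{k+1})=(i_1,j_1)$ and $(i_{k+2},j_{k+2})=(i_2,j_2)$, the extended sequence of $k+2$ entries also satisfies conditions (1)–(3). A submatrix is formed by the entries in the intersection of chosen rows and chosen columns. *)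

From mathcomp Require Import all_boot all_order all_algebra.
Set Implicit Arguments. Unset Strict Implicit. Unset Printing Implicit Defensive.

(* A q-ary m x n matrix is an element of 'M['I_q]_(m, n). *)

Definition struct_vec (q n : nat) (v : 'I_n -> 'I_q) : {ffun 'I_q -> nat} :=
  [ffun k => #|[pred j | v j == k]|].

Definition row_sv (q m n : nat) (M : 'M['I_q]_(m, n)) (i : 'I_m) :=
  struct_vec (fun j => M i j).
Definition col_sv (q m n : nat) (M : 'M['I_q]_(m, n)) (j : 'I_n) :=
  struct_vec (fun i => M i j).

Definition weak_lonesum (q m n : nat) (M : 'M['I_q]_(m, n)) : Prop :=
  forall N : 'M['I_q]_(m, n),
    (forall i, row_sv N i = row_sv M i) ->
    (forall j, col_sv N j = col_sv M j) -> N = M.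

Definition same_line (m n : nat) (p p' : 'I_m * 'I_n) : bool :=
  (p.1 == p'.1) || (p.2 == p'.2).

Definition path_cond1 (m n : nat) (s : seq ('I_m * 'I_n)) : bool :=
  all (fun pr => same_line pr.1 pr.2) (zip s (behead s)).

Definition path_cond2 (m n : nat) (s : seq ('I_m * 'I_n)) : bool :=
  all (fun t : ('I_m * 'I_n) * (('I_m * 'I_n) * ('I_m * 'I_n)) =>
         let: (a, (b, c)) := t in
         ~~ ((a.1 == b.1) && (b.1 == c.1)) && ~~ ((a.2 == b.2) && (b.2 == c.2)))
      (zip s (zip (behead s) (behead (behead s)))).

Definition path_cond3 (q m n : nat) (M : 'M['I_q]_(m, n))
    (s : seq ('I_m * 'I_n)) : Prop :=
  exists a b : 'I_q, a != b /\
    [seq M p.1 p.2 | p <- s] =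
    [seq (if odd l then b else a) | l <- iota 0 (size s)].

Definition path_conds (q m n : nat) (M : 'M['I_q]_(m, n))
    (s : seq ('I_m * 'I_n)) : Prop :=
  path_cond1 s /\ path_cond2 s /\ path_cond3 M s.

Definition is_path (q m n : nat) (M : 'M['I_q]_(m, n))
    (s : seq ('I_m * 'I_n)) : Prop :=
  uniq s /\ path_conds M s.

(* A cycle (of length size s): a path such that the extended sequence
   (appending the first two entries again) also satisfies (1)-(3). *)
Definition is_cycle (q m n : nat) (M : 'M['I_q]_(m, n))
    (s : seq ('I_m * 'I_n)) : Prop :=
  is_path M s /\ path_conds M (s ++ take 2 s).

Definition strictly_incr (k m : nat) (f : 'I_k -> 'I_m) : Prop :=
  forall x y : 'I_k, x < y -> f x < f y.

Definition has_non_wl_submatrix (q m n : nat) (M : 'M['I_q]_(m, n))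
    (p r : nat) : Prop :=
  exists (f : 'I_p -> 'I_m) (g : 'I_r -> 'I_n),
    strictly_incr f /\ strictly_incr g /\ ~ weak_lonesum (mxsub f g M).

From mathcomp Require Import all_boot all_order all_algebra perm zify.
From Stdlib Require Import Classical.
Set Implicit Arguments. Unset Strict Implicit. Unset Printing Implicit Defensive.

(* A cycle is a closed zigzag: rows R_i and columns C_i, indices taken modulo
   a period t, with M(R_i, C_i) = a and M(R_i, C_i+1) = b.  Take a zigzag of
   minimal period t.  For t = 2 it spans a 2 x 2 submatrix [a b; b a], which is
   not weak lonesum since swapping its rows preserves all structure vectors.
   For t > 2, minimality forbids every chord M(R_i, C_i+s), 1 < s < t, to take
   the value a or b, as it would short-cut the zigzag.  Without bad 2 x 3 and
   3 x 2 submatrices the chords x_i = M(R_i, C_i+2) and y_i = M(R_i+1, C_i)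
   moreover satisfy x_i <> y_i and x_i <> y_i+1, so with only four values all
   x_i equal one value c and all y_i another value y.  This is absurd for t = 3
   (y_2 = x_0), and for t >= 4 the entries of even index form a zigzag of values
   a, c with the same minimal period, whose chords M(R_0, C_4) and M(R_2, C_0)
   would have to differ while both being the fourth value. *)

Section StructureVectors.
Variable q : nat.

Lemma eq_struct_vec n (v w : 'I_n -> 'I_q) : v =1 w -> struct_vec v = struct_vec w.
Proof.
by move=> vw; apply/ffunP => k; rewrite !ffunE; apply: eq_card => j; rewrite !inE vw.
Qed.

Lemma struct_vec_perm n (v : 'I_n -> 'I_q) (s : {perm 'I_n}) :
  struct_vec (v \o s) = struct_vec v.
Proof.
apply/ffunP => k; rewrite !ffunE -(card_image (@perm_inj _ s)).
apply: eq_card => j; apply/imageP/idP => [[i vik ->] //|vjk].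
by exists ((s^-1)%g j); rewrite ?inE /= ?permKV.
Qed.

Lemma struct_vecE n (v : 'I_n -> 'I_q) k : struct_vec v k = count_mem k (codom v).
Proof.
rewrite ffunE cardE /enum_mem size_filter /codom /image_mem count_map enumT.
by apply: eq_count => j; rewrite !inE eq_sym.
Qed.

Lemma perm_struct_vec n n' (v : 'I_n -> 'I_q) (w : 'I_n' -> 'I_q) :
  perm_eq (codom v) (codom w) -> struct_vec v = struct_vec w.
Proof. by move=> /seq.permP vw; apply/ffunP => k; rewrite !struct_vecE vw. Qed.

End StructureVectors.

Section WeakLonesum.
Variables (q p r : nat).
Implicit Type A : 'M['I_q]_(p, r).

Lemma row_sv_row_perm s A i : row_sv (row_perm s A) i = row_sv A (s i).
Proof. by apply: eq_struct_vec => j; rewrite mxE. Qed.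

Lemma col_sv_row_perm s A j : col_sv (row_perm s A) j = col_sv A j.
Proof.
by rewrite /col_sv -[RHS](struct_vec_perm _ s); apply: eq_struct_vec => i; rewrite mxE.
Qed.

Lemma row_sv_tr A i : row_sv A^T i = col_sv A i.
Proof. by apply: eq_struct_vec => j; rewrite mxE. Qed.

Lemma col_sv_tr A j : col_sv A^T j = row_sv A j.
Proof. by apply: eq_struct_vec => i; rewrite mxE. Qed.

Lemma weak_lonesum_row_perm s A : weak_lonesum A -> weak_lonesum (row_perm s A).
Proof.
move=> wlA N rowN colN.
have sNA: row_perm (s^-1)%g N = A.
  apply: wlA => [i|j]; first by rewrite row_sv_row_perm rowN row_sv_row_perm permKV.
  by rewrite col_sv_row_perm colN col_sv_row_perm.
by rewrite -sNA; apply/matrixP => i j; rewrite !mxE permK.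
Qed.

Lemma row_swap_not_weak_lonesum A i1 i2 :
  row_sv A i1 = row_sv A i2 -> row i1 A != row i2 A -> ~ weak_lonesum A.
Proof.
move=> sv12 row12 wlA.
have swapA : xrow i1 i2 A = A.
  apply: wlA => [i|j]; last exact: col_sv_row_perm.
  by rewrite row_sv_row_perm; case: tpermP => [->|->|//]; rewrite sv12.
case/negP: row12; apply/eqP/rowP => j.
by rewrite -[in LHS]swapA !mxE tpermL.
Qed.

End WeakLonesum.

Section Transpose.
Local Open Scope ring_scope.

Lemma weak_lonesum_tr q p r (A : 'M['I_q]_(p, r)) : weak_lonesum A -> weak_lonesum A^T.
Proof.
move=> wlA N rowN colN; rewrite -[N]trmxK; congr trmx.
by apply: wlA => [i|j]; rewrite ?row_sv_tr ?colN ?col_sv_tr ?rowN ?row_sv_tr.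
Qed.

Lemma weak_lonesum_col_perm q p r s (A : 'M['I_q]_(p, r)) :
  weak_lonesum A -> weak_lonesum (col_perm s A).
Proof.
move=> /weak_lonesum_tr /(weak_lonesum_row_perm (s := s)) /weak_lonesum_tr.
by rewrite tr_row_perm trmxK.
Qed.

Lemma col_swap_not_weak_lonesum q p r (A : 'M['I_q]_(p, r)) j1 j2 :
  col_sv A j1 = col_sv A j2 -> col j1 A != col j2 A -> ~ weak_lonesum A.
Proof.
move=> sv12 col12 /weak_lonesum_tr.
apply: (row_swap_not_weak_lonesum (i1 := j1) (i2 := j2)).
  by rewrite !row_sv_tr.
by rewrite -!tr_col (inj_eq (@trmx_inj _ _ _)).
Qed.

End Transpose.

Lemma increasing_reindex p m (f : 'I_p -> 'I_m) :
  injective f -> exists s : {perm 'I_p}, strictly_incr (f \o s).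
Proof.
move=> f_inj.
pose below i := [pred j | f j < f i].
have rank_lt i : #|below i| < p.
  suff: #|below i| < #|'I_p| by rewrite card_ord.
  apply/proper_card/properP; split; first exact/subsetP.
  by exists i; rewrite // inE ltnn.
pose rank i := Ordinal (rank_lt i).
have rank_mono i j : f i < f j -> rank i < rank j.
  move=> fij /=; apply/proper_card/properP; split.
    by apply/subsetP => k; rewrite !inE => /ltn_trans; apply.
  by exists i; rewrite !inE ?ltnn.
have rank_inj : injective rank.
  move=> i j rij; apply/f_inj/val_inj/eqP; rewrite eqn_leq.
  by apply/andP; split; rewrite leqNgt; apply/negP => /rank_mono; rewrite rij ltnn.
pose s := ((perm rank_inj)^-1)%g.
have rankK z : rank (s z) = z by rewrite -permE permKV.
exists s => x y xy /=.
case: (ltngtP (f (s x)) (f (s y))) => // [/rank_mono|/val_inj/f_inj sxy].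
  by rewrite !rankK ltnNge (ltnW xy).
by move: xy; rewrite -(rankK x) -(rankK y) sxy ltnn.
Qed.

Lemma non_wl_submatrix_of_inj q m n p r (M : 'M['I_q]_(m, n))
    (f : 'I_p -> 'I_m) (g : 'I_r -> 'I_n) :
  injective f -> injective g -> ~ weak_lonesum (mxsub f g M) ->
  has_non_wl_submatrix M p r.
Proof.
move=> f_inj g_inj nwl.
have [s incr_fs] := increasing_reindex f_inj.
have [s' incr_gs'] := increasing_reindex g_inj.
exists (f \o s), (g \o s'); do 2!split=> //.
move=> /(weak_lonesum_col_perm (s := (s'^-1)%g)).
move=> /(weak_lonesum_row_perm (s := (s^-1)%g)).
suff -> : row_perm (s^-1)%g (col_perm (s'^-1)%g (mxsub (f \o s) (g \o s') M)) =
          mxsub f g M by [].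
by apply/matrixP => i j; rewrite !mxE /= !permKV.
Qed.

Section Patterns.
Variables (q m n : nat) (M : 'M['I_q]_(m, n)).

Lemma non_wl_2x2 r1 r2 c1 c2 a b :
  r1 != r2 -> c1 != c2 -> a != b ->
  M r1 c1 = a -> M r1 c2 = b -> M r2 c1 = b -> M r2 c2 = a ->
  has_non_wl_submatrix M 2 2.
Proof.
move=> r12 c12 ab M11 M12 M21 M22.
apply: (non_wl_submatrix_of_inj (f := tnth [tuple r1; r2]) (g := tnth [tuple c1; c2])).
- by apply/tuple_uniqP; rewrite /= inE andbT.
- by apply/tuple_uniqP; rewrite /= inE andbT.
apply: (row_swap_not_weak_lonesum (i1 := ord0) (i2 := ord_max)).
  apply: perm_struct_vec; rewrite !codomE !enum_ordSl enum_ord0 /= !mxE /=.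
  by rewrite M11 M12 M21 M22 -(perm_rot 1).
by apply: contra_neq ab => /rowP /(_ ord0); rewrite !mxE /= M11 M21.
Qed.

Lemma non_wl_2x3 r1 r2 c1 c2 c3 a b x :
  r1 != r2 -> uniq [:: c1; c2; c3] -> a != b ->
  M r1 c1 = a -> M r1 c2 = b -> M r1 c3 = x ->
  M r2 c1 = x -> M r2 c2 = a -> M r2 c3 = b ->
  has_non_wl_submatrix M 2 3.
Proof.
move=> r12 c123 ab M11 M12 M13 M21 M22 M23.
apply: (non_wl_submatrix_of_inj (f := tnth [tuple r1; r2])
                                 (g := tnth [tuple c1; c2; c3])).
- by apply/tuple_uniqP; rewrite /= inE andbT.
- exact/tuple_uniqP.
apply: (row_swap_not_weak_lonesum (i1 := ord0) (i2 := ord_max)).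
  apply: perm_struct_vec; rewrite !codomE !enum_ordSl enum_ord0 /= !mxE /=.
  by rewrite M11 M12 M13 M21 M22 M23 -(perm_rot 2).
by apply: contra_neq ab => /rowP /(_ (lift ord0 ord0)); rewrite !mxE /= M12 M22.
Qed.

Lemma non_wl_3x2 r1 r2 r3 c1 c2 a b x :
  uniq [:: r1; r2; r3] -> c1 != c2 -> a != b ->
  M r1 c1 = a -> M r2 c1 = b -> M r3 c1 = x ->
  M r1 c2 = x -> M r2 c2 = a -> M r3 c2 = b ->
  has_non_wl_submatrix M 3 2.
Proof.
move=> r123 c12 ab M11 M21 M31 M12 M22 M32.
apply: (non_wl_submatrix_of_inj (f := tnth [tuple r1; r2; r3])
                                 (g := tnth [tuple c1; c2])).
- exact/tuple_uniqP.
- by apply/tuple_uniqP; rewrite /= inE andbT.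
apply: (col_swap_not_weak_lonesum (j1 := ord0) (j2 := ord_max)).
  apply: perm_struct_vec; rewrite !codomE !enum_ordSl enum_ord0 /= !mxE /=.
  by rewrite M11 M21 M31 M12 M22 M32 -(perm_rot 2).
by apply: contra_neq ab => /colP /(_ (lift ord0 ord0)); rewrite !mxE /= M21 M22.
Qed.

End Patterns.

Section PathConditions.
Variables (q m n : nat) (M : 'M['I_q]_(m, n)) (x0 : 'I_m * 'I_n).
Variable s : seq ('I_m * 'I_n).
Local Notation P l := (nth x0 s l).

Lemma path_cond1_nth l : path_cond1 s -> l.+1 < size s -> same_line (P l) (P l.+1).
Proof.
move=> /all_nthP cond1 ls.
have l_zip : l < size (zip s (behead s)) by rewrite size_zip size_behead; lia.
by have := cond1 (x0, x0) l l_zip; rewrite nth_zip_cond l_zip /= nth_behead.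
Qed.

Lemma path_cond2_nth l : path_cond2 s -> l.+2 < size s ->
  ~~ (((P l).1 == (P l.+1).1) && ((P l.+1).1 == (P l.+2).1)) &&
  ~~ (((P l).2 == (P l.+1).2) && ((P l.+1).2 == (P l.+2).2)).
Proof.
move=> /all_nthP cond2 ls.
have l_zip2 : l < size (zip (behead s) (behead (behead s))).
  by rewrite size_zip !size_behead; lia.
have l_zip : l < size (zip s (zip (behead s) (behead (behead s)))).
  by rewrite !size_zip !size_behead; lia.
have := cond2 (x0, (x0, x0)) l l_zip.
by rewrite nth_zip_cond l_zip /= nth_zip_cond l_zip2 /= !nth_behead.
Qed.

Lemma path_cond3_nth a b l :
  [seq M p.1 p.2 | p <- s] = [seq (if odd l then b else a) | l <- iota 0 (size s)] ->
  l < size s -> M (P l).1 (P l).2 = if odd l then b else a.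
Proof.
move=> /(congr1 (nth a ^~ l)) cond3 ls.
by move: cond3; rewrite (nth_map x0) // (nth_map 0) ?size_iota // nth_iota.
Qed.

End PathConditions.

Record alt_loop q m n (M : 'M['I_q]_(m, n)) (a b : 'I_q) (k : nat)
    (P : nat -> 'I_m * 'I_n) : Prop := AltLoop {
  alt_loop_neq : a != b;
  alt_loop_per : forall l, P (l + k) = P l;
  alt_loop_val : forall l, M (P l).1 (P l).2 = if odd l then b else a;
  alt_loop_line : forall l, same_line (P l) (P l.+1);
  alt_loop_turn : forall l,
    ~~ (((P l).1 == (P l.+1).1) && ((P l.+1).1 == (P l.+2).1)) &&
    ~~ (((P l).2 == (P l.+1).2) && ((P l.+1).2 == (P l.+2).2)) }.

Lemma nth_cat_take2 T (x0 : T) s l : 2 <= size s -> l < size s + 2 ->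
  nth x0 (s ++ take 2 s) l = nth x0 s (l %% size s).
Proof.
move=> s_ge2 l_lt; rewrite nth_cat; case: ltnP => [l_lt_s|s_le_l].
  by rewrite modn_small.
have -> : l %% size s = l - size s.
  by rewrite -[in LHS](subnK s_le_l) modnDr modn_small; lia.
by rewrite nth_take //; lia.
Qed.

Lemma cycle_alt_loop q m n (M : 'M['I_q]_(m, n)) s : is_cycle M s -> 2 <= size s ->
  exists a b P, alt_loop M a b (size s) P.
Proof.
case: s => // x0 s1; set s := x0 :: s1; set k := size s => cyc k_ge2.
have [_ [cond1 [cond2 [a [b [ab cond3]]]]]] := cyc.
set ext := s ++ take 2 s in cond1 cond2 cond3.
have size_ext : size ext = k + 2 by rewrite size_cat size_takel.
pose P l := nth x0 s (l %% k).
have extP l : l < k + 2 -> nth x0 ext l = P l by exact: nth_cat_take2.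
have val_ext l : l < k + 2 -> M (P l).1 (P l).2 = if odd l then b else a.
  by move=> lk; rewrite -extP // (path_cond3_nth _ cond3) // size_ext.
have k_even : ~~ odd k.
  apply: contraNN ab => k_odd.
  have Pk : P k = P 0 by rewrite /P modnn mod0n.
  have k_lt : k < k + 2 by lia.
  by have := val_ext k k_lt; rewrite Pk (val_ext 0) // k_odd /= => ->.
have l_mod l : l %% k < k by rewrite ltn_pmod //; lia.
have ext_mod l : [/\ nth x0 ext (l %% k) = P l, nth x0 ext (l %% k).+1 = P l.+1
                    & nth x0 ext (l %% k).+2 = P l.+2].
  have := l_mod l; split.
  - by rewrite extP /P ?modn_mod //; lia.
  - by rewrite -[(l %% k).+1]addn1 extP /P ?modnDml ?addn1 //; lia.
  - by rewrite -[(l %% k).+2]addn2 extP /P ?modnDml ?addn2 //; lia.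
exists a, b, P; split=> // l; have [E0 E1 E2] := ext_mod l.
- by rewrite /P modnDr.
- have -> : P l = P (l %% k) by rewrite /P modn_mod.
  rewrite val_ext; last by have := l_mod l; lia.
  by rewrite {2}(divn_eq l k) oddD oddM (negbTE k_even) andbF.
- rewrite -E0 -E1 path_cond1_nth //.
  by have := l_mod l; lia.
- rewrite -E0 -E1 -E2 path_cond2_nth //.
  by have := l_mod l; lia.
Qed.

(* The closed walk (R 0, C 0), (R 0, C 1), (R 1, C 1), (R 1, C 2), ... of
   period t, alternately turning along a row and along a column, whose entries
   alternate between a (at (R i, C i)) and b (at (R i, C i.+1)). *)
Record zigzag q m n (M : 'M['I_q]_(m, n)) (a b : 'I_q) (t : nat)
    (R : nat -> 'I_m) (C : nat -> 'I_n) : Prop := Zigzag {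
  zigzag_neq : a != b;
  zigzag_gt0 : 0 < t;
  zigzag_Rper : forall i, R (i + t) = R i;
  zigzag_Cper : forall i, C (i + t) = C i;
  zigzag_diag : forall i, M (R i) (C i) = a;
  zigzag_off : forall i, M (R i) (C i.+1) = b }.

Lemma succ_modn k s : 0 < s ->
  (if k.+1 %% s == 0 then s else k.+1 %% s) = (k %% s).+1.
Proof.
move=> s_gt0; rewrite modnS; case: (boolP (s %| k.+1)) => [dvd_s|_] //=.
apply/eqP; rewrite eqn_leq ltn_pmod // dvdn_leq //.
by move: dvd_s; rewrite {1}(divn_eq k s) -addnS dvdn_addr // dvdn_mull.
Qed.

Section Zigzag.
Variables (q m n : nat) (M : 'M['I_q]_(m, n)) (a b : 'I_q) (t : nat).
Variables (R : nat -> 'I_m) (C : nat -> 'I_n).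
Hypothesis zz : zigzag M a b t R C.

Lemma zigzag_row_neq i : R i != R i.+1.
Proof.
apply: contraNneq (zigzag_neq zz) => Ri.
by rewrite -(zigzag_off zz i) Ri (zigzag_diag zz).
Qed.

Lemma zigzag_col_neq i : C i != C i.+1.
Proof.
apply: contraNneq (zigzag_neq zz) => Ci.
by rewrite -(zigzag_diag zz i) -(zigzag_off zz i) Ci.
Qed.

Lemma zigzag_shift i : zigzag M a b t (fun k => R (i + k)) (fun k => C (i + k)).
Proof.
case: zz => ab t_gt0 Rper Cper Mdiag Moff; split=> // k; rewrite ?addnA //.
by rewrite addnS.
Qed.

Lemma zigzag_tr : zigzag M^T b a t (fun k => C k.+1) R.
Proof.
case: zz => ab t_gt0 Rper Cper Mdiag Moff; split=> // [|k|k|k]; rewrite ?mxE //.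
- by rewrite eq_sym.
- by rewrite -addSn Cper.
Qed.

Lemma zigzag_double c : a != c -> (forall i, M (R i) (C i.+2) = c) ->
  zigzag M a c t (fun k => R k.*2) (fun k => C k.*2).
Proof.
case: zz => ab t_gt0 Rper Cper Mdiag Moff ac Mc.
by split=> // k; rewrite ?doubleD -?addnn ?addnA ?Rper ?Cper.
Qed.

(* A chord of value a closes the first s steps into a zigzag of period s, the
   column C s taking the place of C 0. *)
Lemma zigzag_shortcut s : 0 < s -> M (R 0) (C s) = a ->
  zigzag M a b s (fun k => R (k %% s))
    (fun k => C (if k %% s == 0 then s else k %% s)).
Proof.
case: zz => ab _ _ _ Mdiag Moff s_gt0 Ms; split=> // k; rewrite ?modnDr //.
- by case: eqP => [->|_].
- by rewrite succ_modn.
Qed.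

End Zigzag.

Section AltLoop.
Variables (q m n : nat) (M : 'M['I_q]_(m, n)) (a b : 'I_q) (k : nat).
Variable P : nat -> 'I_m * 'I_n.
Hypothesis loop : alt_loop M a b k P.

Lemma alt_loop_even : ~~ odd k.
Proof.
apply: contraNN (alt_loop_neq loop) => k_odd.
have := alt_loop_val loop k.
by rewrite -[k]add0n (alt_loop_per loop) (alt_loop_val loop) add0n k_odd /= => ->.
Qed.

Lemma alt_loop_shift : alt_loop M b a k (fun l => P l.+1).
Proof.
case: loop => ab per val line turn; split=> // [|l|l].
- by rewrite eq_sym.
- by rewrite -addSn per.
- by rewrite val /=; case: (odd l).
Qed.

Lemma alt_loop_col_step l : ((P l).2 == (P l.+1).2) = ~~ ((P l).1 == (P l.+1).1).
Proof.
move: (alt_loop_line loop l) (alt_loop_val loop l) (alt_loop_val loop l.+1).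
rewrite /same_line /=; case: (P l) => i j; case: (P l.+1) => i' j' /=.
case: eqP => [<-|_]; case: eqP => [<-|_] //= _ -> /eqP.
have ab := alt_loop_neq loop.
by case: (odd l); rewrite /= ?(negbTE ab) // eq_sym (negbTE ab).
Qed.

Lemma alt_loop_row_step l :
  ((P l.+1).1 == (P l.+2).1) = ~~ ((P l).1 == (P l.+1).1).
Proof.
have := alt_loop_turn loop l; rewrite !alt_loop_col_step.
by case: (_ == _); case: (_ == _).
Qed.

Lemma alt_loop_row_parity l :
  ((P l).1 == (P l.+1).1) = odd l (+) ((P 0).1 == (P 1).1).
Proof.
elim: l => [//|l IH]; rewrite alt_loop_row_step IH /=.
by case: (odd l); case: (_ == _).
Qed.

Lemma alt_loop_zigzag_row : 0 < k -> (P 0).1 == (P 1).1 ->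
  zigzag M a b k./2 (fun j => (P j.*2).1) (fun j => (P j.*2).2).
Proof.
move=> k_gt0 row0.
have k_half : (k./2).*2 = k by rewrite -[RHS]odd_double_half (negbTE alt_loop_even).
have per j : P (j + k./2).*2 = P j.*2 by rewrite doubleD k_half (alt_loop_per loop).
split=> [||j|j|j|j].
- exact: alt_loop_neq loop.
- by rewrite -double_gt0 k_half.
- by rewrite per.
- by rewrite per.
- by rewrite (alt_loop_val loop) odd_double.
have /eqP -> : (P j.*2).1 == (P j.*2.+1).1.
  by rewrite alt_loop_row_parity odd_double row0.
have /eqP -> : (P j.+1.*2).2 == (P j.*2.+1).2.
  by rewrite doubleS eq_sym alt_loop_col_step alt_loop_row_parity /= odd_double row0.
by rewrite (alt_loop_val loop) /= odd_double.
Qed.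

End AltLoop.

Lemma alt_loop_zigzag q m n (M : 'M['I_q]_(m, n)) a b k P :
  alt_loop M a b k P -> 0 < k -> exists a' b' R C, zigzag M a' b' k./2 R C.
Proof.
move=> loop k_gt0; case row0 : ((P 0).1 == (P 1).1).
  exists a, b, (fun j => (P j.*2).1), (fun j => (P j.*2).2).
  exact: alt_loop_zigzag_row.
exists b, a, (fun j => (P j.*2.+1).1), (fun j => (P j.*2.+1).2).
apply: (alt_loop_zigzag_row (alt_loop_shift loop)) => //.
by rewrite (alt_loop_row_step loop) row0.
Qed.

Definition minimal_period q m n (M : 'M['I_q]_(m, n)) (t : nat) : Prop :=
  forall a b t' R C, zigzag M a b t' R C -> t <= t'.

Lemma zigzag_period_gt1 q m n (M : 'M['I_q]_(m, n)) a b t R C :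
  zigzag M a b t R C -> 1 < t.
Proof.
move=> zz; rewrite ltn_neqAle (zigzag_gt0 zz) andbT.
by apply: contraNneq (zigzag_col_neq zz 0) => ->; rewrite -[t]add0n (zigzag_Cper zz).
Qed.

Lemma zigzag_period2_non_wl q m n (M : 'M['I_q]_(m, n)) a b R C :
  zigzag M a b 2 R C -> has_non_wl_submatrix M 2 2.
Proof.
move=> zz; apply: (non_wl_2x2 (r1 := R 0) (r2 := R 1) (c1 := C 0) (c2 := C 1)
                              (a := a) (b := b)).
- exact: zigzag_row_neq zz 0.
- exact: zigzag_col_neq zz 0.
- exact: zigzag_neq zz.
- exact: zigzag_diag zz 0.
- exact: zigzag_off zz 0.
- by rewrite -[C 0](zigzag_Cper zz 0); exact: zigzag_off zz 1.
- exact: zigzag_diag zz 1.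
Qed.

Lemma exists_shortest_zigzag q m n (M : 'M['I_q]_(m, n)) a b t R C :
  zigzag M a b t R C ->
  exists a' b' t' R' C', zigzag M a' b' t' R' C' /\ minimal_period M t'.
Proof.
elim/ltn_ind: t a b R C => t IH a b R C zz.
have [[a' [b' [t' [R' [C' [zz' t't]]]]]]|none] :=
  classic (exists a' b' t' R' C', zigzag M a' b' t' R' C' /\ t' < t).
  exact: IH zz'.
exists a, b, t, R, C; split=> // a'' b'' t'' R'' C'' zz''.
by rewrite leqNgt; apply/negP => t''t; apply: none; exists a'', b'', t'', R'', C''.
Qed.

Section ShortestZigzag.
Variables (q m n : nat) (M : 'M['I_q]_(m, n)) (a b : 'I_q) (t : nat).
Variables (R : nat -> 'I_m) (C : nat -> 'I_n).
Hypothesis zz : zigzag M a b t R C.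
Hypothesis shortest : minimal_period M t.

Lemma shortest_zigzag_chord i s : 1 < s < t -> M (R i) (C (i + s)) \notin [:: a; b].
Proof.
move=> /andP [s_gt1 s_lt_t]; have zz_i := zigzag_shift zz i.
rewrite !inE; apply/norP; split; apply/eqP => Ms.
  have Ms' : M (R (i + 0)) (C (i + s)) = a by rewrite addn0.
  by have := shortest (zigzag_shortcut zz_i (ltnW s_gt1) Ms'); rewrite leqNgt s_lt_t.
(* A chord of value b is a chord of value a of the transposed zigzag, whose
   diagonal carries the b-entries. *)
have zz_tr := zigzag_shift (zigzag_tr zz_i) s.-1.
have Ms' : (M^T)%R (C (i + (s.-1 + 0).+1)) (R (i + (s.-1 + (t - s).+1))) = b.
  have -> : i + (s.-1 + (t - s).+1) = i + t by lia.
  by rewrite mxE (zigzag_Rper zz) addn0 prednK ?(ltnW s_gt1).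
have := zigzag_tr (zigzag_shortcut zz_tr (ltn0Sn _) Ms').
by rewrite trmxK => /shortest; lia.
Qed.

End ShortestZigzag.

Lemma ord4_pigeonhole (a b c u v : 'I_4) : a != b ->
  c \notin [:: a; b] -> u \notin [:: a; b] -> v \notin [:: a; b] ->
  c != u -> c != v -> u = v.
Proof.
move=> ab c_ab u_ab v_ab cu cv; apply/eqP; apply: contraT => uv.
have /card_uniqP card5 : uniq [:: a; b; c; u; v].
  move: c_ab u_ab v_ab; rewrite /= !inE !negb_or ab cu cv uv.
  move=> /andP[c_a c_b] /andP[u_a u_b] /andP[v_a v_b].
  by rewrite !(eq_sym a) !(eq_sym b) c_a c_b u_a u_b v_a v_b.
by have := max_card (mem [:: a; b; c; u; v]); rewrite card5 card_ord.
Qed.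

Section FourValues.
Variables (m n : nat) (M : 'M['I_4]_(m, n)) (a b : 'I_4) (t : nat).
Variables (R : nat -> 'I_m) (C : nat -> 'I_n).
Hypothesis zz : zigzag M a b t R C.
Hypothesis shortest : minimal_period M t.
Hypothesis no_2x3 : ~ has_non_wl_submatrix M 2 3.
Hypothesis no_3x2 : ~ has_non_wl_submatrix M 3 2.
Hypothesis t_gt2 : 2 < t.

(* With x := M (R i) (C i.+2), y := M (R i.+1) (C i), z := M (R i.+2) (C i.+1):
   rows R i, R i.+1 read (a, b, x), (y, a, b) on columns C i, C i.+1, C i.+2,
   and columns C i.+1, C i.+2 read (b, a, z), (x, b, a) on rows R i, R i.+1, R i.+2. *)
Lemma shortest_zigzag_local i :
  [/\ M (R i) (C i.+2) \notin [:: a; b], M (R i.+1) (C i) \notin [:: a; b],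
      M (R i) (C i.+2) != M (R i.+1) (C i) &
      M (R i) (C i.+2) != M (R i.+2) (C i.+1)].
Proof.
have [Mdiag Moff] := (zigzag_diag zz, zigzag_off zz).
have x_ab : M (R i) (C i.+2) \notin [:: a; b].
  by have := shortest_zigzag_chord zz shortest i (s := 2); rewrite addn2; apply.
have y_ab : M (R i.+1) (C i) \notin [:: a; b].
  have -> : C i = C (i.+1 + t.-1) by rewrite -(zigzag_Cper zz i); congr C; lia.
  by apply: (shortest_zigzag_chord zz shortest); lia.
have [x_a _] : M (R i) (C i.+2) != a /\ _ := norP x_ab.
split=> //; apply/eqP => xy.
- apply: no_2x3; apply: (non_wl_2x3 (r1 := R i) (r2 := R i.+1) (c1 := C i)
    (c2 := C i.+1) (c3 := C i.+2) (a := a) (b := b) (x := M (R i) (C i.+2))) => //.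
  + exact: (zigzag_row_neq zz i).
  + rewrite /= !inE negb_or !(zigzag_col_neq zz) /= andbT.
    by apply: contraNneq x_a => <-; rewrite Mdiag.
  + exact: (zigzag_neq zz).
- apply: no_3x2; apply: (non_wl_3x2 (r1 := R i) (r2 := R i.+1) (r3 := R i.+2)
    (c1 := C i.+1) (c2 := C i.+2) (a := b) (b := a) (x := M (R i) (C i.+2))) => //.
  + rewrite /= !inE negb_or !(zigzag_row_neq zz) /= andbT.
    by apply: contraNneq x_a => ->; rewrite Mdiag.
  + exact: (zigzag_col_neq zz).
  + by rewrite eq_sym (zigzag_neq zz).
Qed.

Lemma shortest_zigzag_constant i :
  M (R i) (C i.+2) = M (R 0) (C 2) /\ M (R i.+1) (C i) = M (R 1) (C 0).
Proof.
elim: i => [//|i [<- <-]].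
have [x_ab y_ab xy xz] := shortest_zigzag_local i.
have [x'_ab z_ab x'z _] := shortest_zigzag_local i.+1.
have ab := zigzag_neq zz.
have zy := ord4_pigeonhole ab x_ab z_ab y_ab xz xy.
split=> //; apply: (ord4_pigeonhole ab z_ab x'_ab x_ab); rewrite eq_sym //.
Qed.

End FourValues.

Lemma shortest_zigzag_period_le2 m n (M : 'M['I_4]_(m, n)) a b t R C :
  zigzag M a b t R C ->
  minimal_period M t ->
  ~ has_non_wl_submatrix M 2 3 -> ~ has_non_wl_submatrix M 3 2 -> t <= 2.
Proof.
move=> zz shortest no_2x3 no_3x2; rewrite leqNgt; apply/negP => t_gt2.
have local := shortest_zigzag_local zz shortest no_2x3 no_3x2 t_gt2.
have const := shortest_zigzag_constant zz shortest no_2x3 no_3x2 t_gt2.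
have [c_ab _ cy _] := local 0.
have [t3|t_gt3] : t = 3 \/ 3 < t by lia.
  have R3 : R 3 = R 0 by rewrite -t3 -[t]add0n (zigzag_Rper zz).
  by move: cy; rewrite -(const 2).2 R3 eqxx.
have a_c : a != M (R 0) (C 2).
  by move: c_ab; rewrite !inE negb_or eq_sym => /andP[].
have zz2 := zigzag_double zz a_c (fun i => (const i).1).
have [x_ac y_ac xy _] : [/\ M (R 0) (C 4) \notin [:: a; M (R 0) (C 2)],
    M (R 2) (C 0) \notin [:: a; M (R 0) (C 2)],
    M (R 0) (C 4) != M (R 2) (C 0) & _] :=
  shortest_zigzag_local zz2 shortest no_2x3 no_3x2 t_gt2 0.
have [t4|t_gt4] : t = 4 \/ 4 < t by lia.
  have C4 : C 4 = C 0 by rewrite -(zigzag_Cper zz 0) t4.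
  by move: x_ac; rewrite C4 (zigzag_diag zz) !inE eqxx.
have x_ab : M (R 0) (C 4) \notin [:: a; b].
  by apply: (shortest_zigzag_chord zz shortest); lia.
have y_ab : M (R 2) (C 0) \notin [:: a; b].
  have -> : C 0 = C (2 + (t - 2)) by rewrite -(zigzag_Cper zz 0); congr C; lia.
  by apply: (shortest_zigzag_chord zz shortest); lia.
have c_x : M (R 0) (C 2) != M (R 0) (C 4).
  by move: x_ac; rewrite !inE negb_or => /andP[_]; rewrite eq_sym.
have c_y : M (R 0) (C 2) != M (R 2) (C 0).
  by move: y_ac; rewrite !inE negb_or => /andP[_]; rewrite eq_sym.
by move: xy; rewrite (ord4_pigeonhole (zigzag_neq zz) c_ab x_ab y_ab c_x c_y) eqxx.
Qed.

Theorem theorem3p10 (m n : nat) (M : 'M['I_4]_(m, n)) :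
  (exists s : seq ('I_m * 'I_n), is_cycle M s /\ 6 <= size s) ->
  has_non_wl_submatrix M 2 2 \/ has_non_wl_submatrix M 2 3 \/
  has_non_wl_submatrix M 3 2.
Proof.
move=> [s [cyc size_s]].
have size_s_ge2 : 2 <= size s by apply: leq_trans size_s.
have [a0 [b0 [P loop]]] := cycle_alt_loop cyc size_s_ge2.
have [a1 [b1 [R1 [C1 zz1]]]] := alt_loop_zigzag loop (ltnW size_s_ge2).
have [a [b [t [R [C [zz shortest]]]]]] := exists_shortest_zigzag zz1.
apply: NNPP => /not_or_and [no_2x2 /not_or_and [no_2x3 no_3x2]].
have t_le2 := shortest_zigzag_period_le2 zz shortest no_2x3 no_3x2.
have t2 : t = 2 by have := zigzag_period_gt1 zz; lia.
by subst t; apply: no_2x2; apply: zigzag_period2_non_wl zz.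
Qed.
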